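(* Let $\mathbb{H}\in\{\mathbb{R},\mathbb{C}\}$, let $A\in\mathbb{H}^{m\times d}$ be any matrix, and let $\Omega\subset U_A$ be a convex domain. Then the map $b\mapsto P_{\mathcal{K}_A}(b)$ is continuous on $\Omega$.
   Context: $\mathcal{K}_A:=\{|Ax|:x\in\mathbb{H}^d\}\subset\mathbb{R}^m$ with $|Ax|$ the entrywise modulus; $P_{\mathcal{K}_A}(b)$ is the set of points of $\mathcal{K}_A$ at minimal Euclidean distance from $b$; $U_A:=\{b\in\mathbb{R}^m: P_{\mathcal{K}_A}(b)\text{ has exactly one element}\}$, and on $U_A$ the map $P_{\mathcal{K}_A}$ is regarded as single-valued. *)

From HB Require Import structures.
From mathcomp Require Import all_boot all_order all_algebra.
From mathcomp Require Import complex.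
From mathcomp Require Import all_classical all_reals all_analysis.
Set Implicit Arguments. Unset Strict Implicit. Unset Printing Implicit Defensive.
Import Order.TTheory GRing.Theory Num.Theory numFieldNormedType.Exports.
Local Open Scope ring_scope.
Local Open Scope classical_set_scope.

(* H is R (real case) or
   R[i] = complex R (complex case); [modH] is the modulus H -> R
   (absolute value in the real case, complex modulus normc in the complex case). *)

Definition KA (R : realType) (H : pzRingType) (modH : H -> R) (m d : nat)
  (A : 'M[H]_(m, d)) : set 'cV[R]_m :=
  [set map_mx modH (A *m x) | x in [set: 'cV[H]_d]].

Definition sqdist (R : realType) (m : nat) (b c : 'cV[R]_m) : R :=
  \sum_(i < m) (b i 0 - c i 0) ^+ 2.

Definition proj_set (R : realType) (m : nat) (K : set 'cV[R]_m) (b : 'cV[R]_m)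
  : set 'cV[R]_m :=
  [set y | K y /\ forall z, K z -> sqdist b y <= sqdist b z].

Definition U_set (R : realType) (m : nat) (K : set 'cV[R]_m) : set 'cV[R]_m :=
  [set b | exists y, proj_set K b = [set y]].

Definition convex_set_cV (R : realType) (m : nat) (S : set 'cV[R]_m) : Prop :=
  forall b c t, S b -> S c -> 0 <= t <= 1 -> S ((1 - t) *: b + t *: c).

Definition domain_cV (R : realType) (m : nat) (S : set 'cV[R]_m) : Prop :=
  S !=set0 /\ open S /\ connected S.

From HB Require Import structures.
From mathcomp Require Import all_boot all_order all_algebra.
From mathcomp Require Import complex.
From mathcomp Require Import all_classical all_reals all_analysis.
From mathcomp Require Import lra.
Import Order.TTheory GRing.Theory Num.Theory numFieldNormedType.Exports.
Local Open Scope ring_scope.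
Local Open Scope classical_set_scope.
Set Implicit Arguments. Unset Strict Implicit. Unset Printing Implicit Defensive.

(* Of the hypotheses on Omega only P_{K_A}(b) = {p b} is used: the metric
   projection p onto any set K whose bounded parts lie in compact subsets of K
   (K_A is such a set) is continuous wherever it is single-valued.  Near b,
   minimality of p b' against p b keeps p b' in a bounded, hence compact, part
   of K.  A cluster point z of p b' (b' -> b) lies in K, and passing to the
   limit in sqdist b' (p b') <= sqdist b' w shows that z is nearest to b, so
   z = p b.  K_A is the image of H^d under x |-> |Ax|, and a bounded part of it
   is the image of a bounded set because A u = y can be solved by a
   pseudo-inverse with |u| controlled by |y|.  The complex case runs through
   the same argument after identifying C^d with R^(2d). *)

Lemma compact_cluster_cvg (T : topologicalType) (F : set_system T) {PF : ProperFilter F}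
    (C : set T) (x : T) :
  compact C -> F C ->
  (forall z, C z -> cluster F z -> z = x) -> F --> x.
Proof.
move=> cC FC clx U /= Ux; rewrite nbhs_simpl; apply: contrapT => nFU.
(* the trace of F on ~` U is proper, so it clusters in C, necessarily at x *)
have PG : ProperFilter (within (~` U) F).
  apply: Build_ProperFilter_ex => P FP; apply: contrapT => nP; apply: nFU.
  rewrite /within /= in FP.
  by apply: filterS FP => t /= UP; apply: contrapT => nUt; apply: nP; exists t; exact: UP.
have GC : within (~` U) F C by apply: filterS FC => t Ct _.
have [z [Cz clGz]] := cC _ PG GC.
have clFz : cluster F z by move=> A B FA; apply: clGz; apply: filterS FA => t At _.
have zx := clx z Cz clFz; subst z.
have GnU : within (~` U) F (~` U) by apply: filterS (@filterT _ F _) => t _.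
by have [t [nUt Ut]] := clGz _ _ GnU Ux.
Qed.

Lemma cluster_graph (T U : topologicalType) (F : set_system T) {FF : Filter F}
    (f : T -> U) (a : T) (z : U) :
  F --> a -> cluster (f @ F) z -> cluster ((fun t => (t, f t)) @ F) (a, z).
Proof.
move=> Fa clz A B FA [[/= P Q] [Pa Qz] PQB].
pose D := [set t | A (t, f t) /\ P t].
have FD : F D by apply: filterI; [exact: FA | exact: Fa].
have fFD : (f @ F) (f @` D).
  by apply: (@filterS _ F _ D (f @^-1` (f @` D))) => // t Dt; exists t.
have [_ [[t Dt <-] Qft]] := clz _ _ fFD Qz.
by exists (t, f t); split; [exact: Dt.1 | apply: PQB; split => //; exact: Dt.2].
Qed.

Lemma cluster_closed (T : topologicalType) (F : set_system T) (S : set T) (x : T) :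
  closed S -> F S -> cluster F x -> S x.
Proof.
by move=> /closure_id clS FS; rewrite clusterE clS => /(_ S FS).
Qed.

Lemma ler_sum_term (R : numDomainType) (I : finType) (F : I -> R) (i : I) :
  (forall j, 0 <= F j) -> F i <= \sum_j F j.
Proof. by move=> F0; rewrite (bigD1 i) //= lerDl sumr_ge0. Qed.

Section MatrixNorm.
Variable R : realType.

Lemma ler_mx_norm_entry (m n : nat) (x : 'M[R]_(m, n)) i j : `|x i j| <= `|x|.
Proof.
rewrite [X in _ <= X]mx_normrE.
exact: (le_bigmax _ (fun ij : 'I_m * 'I_n => `|x ij.1 ij.2|) (i, j)).
Qed.

Lemma mx_norm_le (m n : nat) (x : 'M[R]_(m, n)) (r : R) :
  0 <= r -> (forall i j, `|x i j| <= r) -> `|x| <= r.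
Proof.
by move=> r0 hx; rewrite [X in X <= _]mx_normrE; apply: bigmax_le => // -[i j] _.
Qed.

Lemma sqr_mx_norm_le_sqdist (m : nat) (b c : 'cV[R]_m) : `|b - c| ^+ 2 <= sqdist b c.
Proof.
change (mx_norm (b - c) ^+ 2 <= sqdist b c).
have [->|] := eqVneq (mx_norm (b - c)) 0.
  by rewrite expr0n sumr_ge0 // => i _; exact: sqr_ge0.
case/mx_norm_neq0 => -[i j] ->; rewrite (ord1 j) /= !mxE real_normK ?num_real //.
by apply: (@ler_sum_term _ _ (fun k => (b k 0 - c k 0) ^+ 2)) => k; exact: sqr_ge0.
Qed.

End MatrixNorm.

Lemma sqdist_continuous (R : realType) (m : nat) :
  continuous (fun bc : 'cV[R]_m * 'cV[R]_m => sqdist bc.1 bc.2).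
Proof.
have -> : (fun bc : 'cV[R]_m * 'cV[R]_m => sqdist bc.1 bc.2) =
    \sum_(i < m) (fun bc : 'cV[R]_m * 'cV[R]_m => (bc.1 i 0 - bc.2 i 0) ^+ 2).
  by rewrite fct_sumE.
elim/big_ind: _ => [|f g cf cg|i _ bc]; first exact: cst_continuous.
  by move=> bc; apply: continuousD; [exact: cf | exact: cg].
apply: (@continuous_comp _ _ _ (fun bc : 'cV[R]_m * 'cV[R]_m => bc.1 i 0 - bc.2 i 0)
  (fun r : R => r ^+ 2)); last exact: exprn_continuous.
apply: continuousB.
  apply: (@continuous_comp _ _ _ fst (fun M : 'cV[R]_m => M i 0)).
    exact: cvg_fst.
  exact: coord_continuous.
apply: (@continuous_comp _ _ _ snd (fun M : 'cV[R]_m => M i 0)).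
  exact: cvg_snd.
exact: coord_continuous.
Qed.

Lemma sqdist_cvg_l (R : realType) (m : nat) (b c : 'cV[R]_m) :
  sqdist b' c @[b' --> b] --> sqdist b c.
Proof.
apply: (@continuous_comp _ _ _ (fun b' => (b', c))
  (fun bc : 'cV[R]_m * 'cV[R]_m => sqdist bc.1 bc.2) b).
  exact: (@cvg_pair _ _ _ (nbhs b) (nbhs b) (nbhs c) _ _ _ id (fun=> c) cvg_id (cvg_cst c)).
exact: sqdist_continuous.
Qed.

(* In R^m this amounts to closedness of K. *)
Definition boundedly_compact (R : realType) (m : nat) (K : set 'cV[R]_m) :=
  forall r : R, exists C, [/\ compact C, C `<=` K & K `&` [set c | `|c| <= r] `<=` C].

Section MetricProjection.
Variables (R : realType) (m : nat) (K Omega : set 'cV[R]_m) (p : 'cV[R]_m -> 'cV[R]_m).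
Hypothesis p_proj : forall b, Omega b -> proj_set K b = [set p b].

Lemma proj_minimal b :
  Omega b -> K (p b) /\ (forall w, K w -> sqdist b (p b) <= sqdist b w).
Proof. by move=> Ob; have : proj_set K b (p b) by rewrite p_proj. Qed.

Lemma proj_near_bounded b : Omega b ->
  \forall b' \near within Omega (nbhs b), `|p b'| <= `|b| + sqdist b (p b) + 3.
Proof.
move=> Ob; have [Kpb _] := proj_minimal Ob.
have near_b : \forall b' \near b, `|b - b'| < 1.
  exact: (@cvgr_dist_lt _ _ _ (nbhs b) _ id b cvg_id 1 ltr01).
have near_sq : \forall b' \near b, sqdist b' (p b) < sqdist b (p b) + 1.
  by apply: (cvgr_lt _ (@sqdist_cvg_l R m b (p b))); rewrite ltrDl.
rewrite near_withinE; near=> b' => Ob'.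
have [_ minb'] := proj_minimal Ob'.
have b'_near : `|b - b'| < 1 by near: b'.
have sq_near : sqdist b' (p b) < sqdist b (p b) + 1 by near: b'.
have sq_min := minb' _ Kpb.
have sq_norm := sqr_mx_norm_le_sqdist b' (p b').
have pb'_le : `|p b'| <= `|b'| + `|b' - p b'| by rewrite -[X in `|X|](subKr b') ler_normB.
have b'_le : `|b'| <= `|b| + `|b - b'| by rewrite -[X in `|X| <= _](subKr b) ler_normB.
have := normr_ge0 (b' - p b'); nra.
Unshelve. all: by end_near.
Qed.

Lemma proj_cluster_minimal b z w : Omega b -> K w ->
  cluster (p @ within Omega (nbhs b)) z -> sqdist b z <= sqdist b w.
Proof.
move=> Ob Kw clz.
pose g (bc : 'cV[R]_m * 'cV[R]_m) := sqdist bc.1 bc.2 - sqdist bc.1 w.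
have gc : continuous g.
  move=> bc; apply: (@continuousB _ _ _ (fun bc => sqdist bc.1 bc.2) (fun bc => sqdist bc.1 w)).
    exact: sqdist_continuous.
  apply: (@continuous_comp _ _ _ (@fst 'cV[R]_m 'cV[R]_m) (fun b' => sqdist b' w)).
    exact: cvg_fst.
  exact: sqdist_cvg_l.
have clS := (continuous_closedP g).1 gc _ (@closed_le _ 0).
have FS : \forall b' \near within Omega (nbhs b), g (b', p b') <= 0.
  apply: filterS (withinT _ _) => b' Ob'.
  by rewrite /g subr_le0; exact: (proj_minimal Ob').2.
have clG : cluster ((fun b' => (b', p b')) @ within Omega (nbhs b)) (b, z).
  by apply: cluster_graph clz; exact: cvg_within.
by have := cluster_closed clS FS clG; rewrite /g /= subr_le0.
Unshelve. all: by end_near.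
Qed.

Theorem proj_continuous : boundedly_compact K -> {within Omega, continuous p}.
Proof.
move=> Kbc; apply/subspace_continuousP => b Ob.
have PF : ProperFilter (within Omega (nbhs b)).
  by apply: within_nbhs_proper; exact: subset_closure.
have [C [cC CK KC]] := Kbc (`|b| + sqdist b (p b) + 3).
apply: (compact_cluster_cvg cC).
  apply: filterS (filterI (withinT _ _) (proj_near_bounded Ob)) => b' [Ob' pb'].
  by apply: KC; split; [exact: (proj_minimal Ob').1 | exact: pb'].
move=> z Cz clz; suff : proj_set K b z by rewrite p_proj.
by split => [|w Kw]; [exact: CK | exact: proj_cluster_minimal clz].
Qed.

End MetricProjection.

Lemma lipschitz_continuous (R : realType) (U V : normedModType R) (f : U -> V) (L : R) :
  (forall x y, `|f x - f y| <= L * `|x - y|) -> continuous f.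
Proof.
move=> fL x; apply/cvgrPdist_lt => e e0.
have L1 : 0 < `|L| + 1 by rewrite ltr_pwDr.
near=> y.
have : `|x - y| < e / (`|L| + 1).
  by near: y; exact: (@cvgr_dist_lt _ _ _ (nbhs x) _ id x cvg_id _ (divr_gt0 e0 L1)).
rewrite ltr_pdivlMr // => hy; apply: le_lt_trans (fL x y) (le_lt_trans _ hy).
have := ler_norm L; have := normr_ge0 (x - y); nra.
Unshelve. all: by end_near.
Qed.

Lemma range_boundedly_compact (R : realType) (m n : nat) (f : 'rV[R]_n -> 'cV[R]_m) :
  continuous f ->
  (forall r, exists M, forall x, `|f x| <= r -> exists2 x', `|x'| <= M & f x' = f x) ->
  boundedly_compact (range f).
Proof.
move=> fc fb r; have [M hM] := fb r.
have cB : compact [set x : 'rV[R]_n | `|x| <= M].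
  apply: bounded_closed_compact.
    by exists M; split => [|M' MM' x /= hx]; [exact: num_real | lra].
  exact: ((continuous_closedP _).1 norm_continuous _ (@closed_le _ M)).
exists (f @` [set x | `|x| <= M]); split.
- by apply: continuous_compact => //; exact: continuous_subspaceT.
- by move=> _ [x _ <-]; exists x.
- by move=> _ [[x _ <-] fxr]; have [x' x'M <-] := hM x fxr; exists x'.
Qed.

Section AbsoluteValue.
Variables (R : realType) (H : fieldType) (modH : H -> R).
Hypotheses (modH0 : modH 0 = 0) (modHN : forall a, modH (- a) = modH a)
  (modHD : forall a b, modH (a + b) <= modH a + modH b)
  (modHM : forall a b, modH (a * b) = modH a * modH b).

Lemma modH_ge0 a : 0 <= modH a.
Proof. by have := modHD a (- a); rewrite subrr modH0 modHN; lra. Qed.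

Lemma modH_sum (I : Type) (s : seq I) (F : I -> H) :
  modH (\sum_(i <- s) F i) <= \sum_(i <- s) modH (F i).
Proof.
elim/big_rec2: _ => [|i y1 y2 _ IH]; first by rewrite modH0.
by apply: le_trans (modHD _ _) _; rewrite lerD2l.
Qed.

Lemma modH_dist a b : `|modH a - modH b| <= modH (a - b).
Proof.
have := modHD (a - b) b; have := modHD (b - a) a.
rewrite !subrK -opprB modHN ler_norml; lra.
Qed.

Lemma modH_mulmx (k d : nat) (M : 'M[H]_(k, d)) (v : 'cV[H]_d) i :
  modH ((M *m v) i 0) <= \sum_j modH (M i j) * modH (v j 0).
Proof.
rewrite mxE; apply: le_trans (modH_sum _ _) _.
by apply: ler_sum => j _; rewrite modHM.
Qed.

(* E parametrises H^d by real coordinates: the transpose for H = R, real and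
   imaginary parts for H = C. *)
Variables (n d : nat) (cE : R) (E : 'rV[R]_n -> 'cV[H]_d).
Hypotheses (cE_ge0 : 0 <= cE) (E_sub : forall x y, E (x - y) = E x - E y)
  (E_bounded : forall x j, modH (E x j 0) <= cE * `|x|)
  (E_onto : forall z, exists2 x, E x = z & `|x| <= \sum_j modH (z j 0)).

Section Matrix.
Variables (m : nat) (A : 'M[H]_(m, d)).
Let g x := map_mx modH (A *m E x).

Lemma KA_range : KA modH A = range g.
Proof.
rewrite /KA /g; apply/seteqP; split => _ [y _ <-]; last by exists (E y).
by have [x <- _] := E_onto y; exists x.
Qed.

Lemma KA_param_continuous : continuous g.
Proof.
pose S := \sum_i \sum_j modH (A i j).
have S_ge0 : 0 <= S by apply: sumr_ge0 => i _; apply: sumr_ge0 => j _; exact: modH_ge0.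
apply: (@lipschitz_continuous _ _ _ _ (S * cE)) => x y.
have xy_ge0 : 0 <= cE * `|x - y| by rewrite mulr_ge0.
rewrite -mulrA; apply: mx_norm_le => [|i j]; first exact: mulr_ge0.
rewrite (ord1 j).
have -> : (g x - g y) i 0 = modH ((A *m E x) i 0) - modH ((A *m E y) i 0).
  by rewrite !mxE.
apply: le_trans (modH_dist _ _) _.
have -> : (A *m E x) i 0 - (A *m E y) i 0 = (A *m E (x - y)) i 0.
  by rewrite E_sub mulmxBr !mxE.
apply: le_trans (modH_mulmx _ _ _) _.
apply: (@le_trans _ _ (\sum_j modH (A i j) * (cE * `|x - y|))).
  by apply: ler_sum => k _; rewrite ler_wpM2l ?modH_ge0.
rewrite -mulr_suml ler_wpM2r //.
apply: (@ler_sum_term _ _ (fun i => \sum_j modH (A i j))) => k.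
by apply: sumr_ge0 => l _; exact: modH_ge0.
Qed.

Lemma KA_param_bounded_preimage r :
  exists M, forall x, `|g x| <= r -> exists2 x', `|x'| <= M & g x' = g x.
Proof.
pose P := pinvmx A^T.
exists (\sum_k \sum_i r * modH (P i k)) => x gxr.
pose y := A *m E x.
have yr i : modH (y i 0) <= r.
  by have := le_trans (ler_mx_norm_entry (g x) i 0) gxr; rewrite mxE ger0_norm ?modH_ge0.
pose u := (y^T *m P)^T.
have Au : A *m u = y.
  have yA : (y^T <= A^T)%MS by rewrite /y trmx_mul submxMl.
  by apply: trmx_inj; rewrite trmx_mul trmxK mulmxKpV.
have [x' Ex' x'M] := E_onto u; exists x'; last by rewrite /g Ex' Au.
apply: le_trans x'M _; apply: ler_sum => k _.
rewrite mxE [X in modH X]mxE; apply: le_trans (modH_sum _ _) _.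
by apply: ler_sum => i _; rewrite mxE modHM ler_wpM2r ?modH_ge0.
Qed.

Theorem KA_proj_continuous (Omega : set 'cV[R]_m) (p : 'cV[R]_m -> 'cV[R]_m) :
  (forall b, Omega b -> proj_set (KA modH A) b = [set p b]) ->
  {within Omega, continuous p}.
Proof.
move=> p_proj; apply: (proj_continuous p_proj); rewrite KA_range.
apply: range_boundedly_compact; first exact: KA_param_continuous.
exact: KA_param_bounded_preimage.
Qed.

End Matrix.
End AbsoluteValue.

Lemma KA_proj_continuous_real (R : realType) (m d : nat) (A : 'M[R]_(m, d))
    (Omega : set 'cV[R]_m) (p : 'cV[R]_m -> 'cV[R]_m) :
  (forall b, Omega b -> proj_set (KA (fun z : R => `|z|) A) b = [set p b]) ->
  {within Omega, continuous p}.
Proof.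
apply: (@KA_proj_continuous R R _ (normr0 _) (@normrN _ _) (@ler_normD _ _) (@normrM _)
  d d 1 (@trmx R 1 d)) => [|x y|x j|z]; first exact: ler01.
- exact: linearB.
- by rewrite mxE mul1r; exact: ler_mx_norm_entry.
exists z^T; first by rewrite trmxK.
apply: mx_norm_le => [|i k]; first by apply: sumr_ge0 => j _.
by rewrite (ord1 i) mxE; apply: (@ler_sum_term _ _ (fun j => `|z j 0|)).
Qed.

Section ComplexModulus.
Variable R : realType.

Lemma normc_ge0 (z : R[i]) : 0 <= Normc.normc z.
Proof. by case: z => a b; exact: sqrtr_ge0. Qed.

Lemma normc_Re_le (z : R[i]) : `|complex.Re z| <= Normc.normc z.
Proof.
case: z => a b /=; rewrite -sqrtr_sqr ler_sqrt ?addr_ge0 ?sqr_ge0 //.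
by rewrite lerDl sqr_ge0.
Qed.

Lemma normc_Im_le (z : R[i]) : `|complex.Im z| <= Normc.normc z.
Proof.
case: z => a b /=; rewrite -sqrtr_sqr ler_sqrt ?addr_ge0 ?sqr_ge0 //.
by rewrite lerDr sqr_ge0.
Qed.

Lemma normc_le_norm_add (a b : R) : Normc.normc (a +i* b)%C <= `|a| + `|b|.
Proof.
rewrite /= -[`|a| + `|b|]ger0_norm ?addr_ge0 // -sqrtr_sqr ler_sqrt ?sqr_ge0 //.
rewrite -(real_normK (num_real a)) -(real_normK (num_real b)).
have := normr_ge0 a; have := normr_ge0 b; nra.
Qed.

Lemma KA_proj_continuous_complex (m d : nat) (A : 'M[R[i]]_(m, d))
    (Omega : set 'cV[R]_m) (p : 'cV[R]_m -> 'cV[R]_m) :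
  (forall b, Omega b -> proj_set (KA (@Normc.normc R) A) b = [set p b]) ->
  {within Omega, continuous p}.
Proof.
pose E (x : 'rV[R]_(d + d)) := \col_j (x 0 (lshift d j) +i* x 0 (rshift d j))%C.
apply: (@KA_proj_continuous R R[i] _ (@Normc.normc0 R) (@normcN R) (@le_normcD R)
  (@Normc.normcM R) (d + d) d 2 E) => [|x y|x j|z]; first exact: ler0n.
- by apply/matrixP => j k; rewrite !mxE.
- rewrite mxE; apply: le_trans (normc_le_norm_add _ _) _.
  by rewrite mulr2n mulrDl mul1r lerD // ler_mx_norm_entry.
exists (row_mx (\row_j complex.Re (z j 0)) (\row_j complex.Im (z j 0))).
  by apply/matrixP => j k; rewrite (ord1 k) mxE row_mxEl row_mxEr !mxE; case: (z j 0).
have normc_le_sum j : Normc.normc (z j 0) <= \sum_j Normc.normc (z j 0).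
  by apply: (@ler_sum_term _ _ (fun j => Normc.normc (z j 0))) => k; exact: normc_ge0.
apply: mx_norm_le => [|i k]; first by apply: sumr_ge0 => j _; exact: normc_ge0.
rewrite (ord1 i) mxE; case: (fintype.split k) => j; rewrite mxE.
  exact: le_trans (normc_Re_le _) (normc_le_sum j).
exact: le_trans (normc_Im_le _) (normc_le_sum j).
Qed.

End ComplexModulus.

Theorem lemma5p4 (R : realType) :
  (forall (m d : nat) (A : 'M[R]_(m, d)) (Omega : set 'cV[R]_m)
          (p : 'cV[R]_m -> 'cV[R]_m),
      domain_cV Omega -> convex_set_cV Omega ->
      Omega `<=` U_set (KA (fun z : R => `|z|) A) ->
      (forall b, Omega b -> proj_set (KA (fun z : R => `|z|) A) b = [set p b]) ->
      {within Omega, continuous p}) /\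
  (forall (m d : nat) (A : 'M[R[i]]_(m, d)) (Omega : set 'cV[R]_m)
          (p : 'cV[R]_m -> 'cV[R]_m),
      domain_cV Omega -> convex_set_cV Omega ->
      Omega `<=` U_set (KA (@Normc.normc R) A) ->
      (forall b, Omega b -> proj_set (KA (@Normc.normc R) A) b = [set p b]) ->
      {within Omega, continuous p}).
Proof.
split=> m d A Omega p _ _ _.
  exact: KA_proj_continuous_real.
exact: KA_proj_continuous_complex.
Qed.
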